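(* Let $v^1,\dots,v^p\in\mathbb{R}^n$ and let $\mathscr V\subset\mathbb{R}_{\max}^n$ be the max-plus cone they generate. If $y\in\mathbb{R}_{\max}^n$ does not belong to $\mathscr V$, then there exist disjoint sets $I,J$ with $I\cup J=\{1,\dots,n\}$ and $a\in\mathbb{R}^n$ such that the half-space $\{x\in\mathbb{R}_{\max}^n:\bigoplus_{i\in I}a_ix_i\le\bigoplus_{j\in J}a_jx_j\}$ contains $\mathscr V$ but not $y$, and its apex $-a$ is a vertex of the natural cell decomposition of $\mathbb{R}_{\max}^n$ induced by $v^1,\dots,v^p$.
   Context: $\mathbb{R}_{\max}=\mathbb{R}\cup\{-\infty\}$ with $a\oplus b=\max(a,b)$, $ab=a+b$; the max-plus cone generated by $v^1,\dots,v^p$ is $\{\bigoplus_r\lambda_rv^r:\lambda_r\in\mathbb{R}_{\max}\}$, where $(\lambda v)_k=\lambda+v_k$. The apex of the half-space $\{x:\bigoplus_{i\in I}a_ix_i\le\bigoplus_{j\in J}a_jx_j\}$ (with $I,J$ a partition of $\{1,\dots,n\}$ and $a\in\mathbb{R}^n$) is $-a$. For $x\in\mathbb{R}^n$, the type of $x$ is $(S_1(x),\dots,S_n(x))$ with $S_j(x)=\{r: v^r_j-x_j=\max_{k}(v^r_k-x_k)\}$. For an $n$-tuple $S=(S_1,\dots,S_n)$ of subsets of $\{1,\dots,p\}$, the cell $X_S=\{x: S_j\subset S_j(x)\ \forall j\}$; the natural cell decomposition is the collection of cells $X_S$, $S$ ranging over types. A vertex of this decomposition is a vector $x\in\mathbb{R}^n$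 whose cell $X_{\mathrm{type}(x)}$ is one-dimensional, i.e. equals $\{\lambda+x:\lambda\in\mathbb{R}\}$ (equivalently, the graph on $\{1,\dots,n\}$ with an edge $\{i,j\}$ whenever $S_i(x)\cap S_j(x)\neq\emptyset$ is connected). *)

From mathcomp Require Import all_boot all_order all_algebra.
From mathcomp Require Import reals.
Set Implicit Arguments. Unset Strict Implicit. Unset Printing Implicit Defensive.
Import Order.TTheory GRing.Theory Num.Theory.
Local Open Scope ring_scope.

(* R_max = R u {-oo}, encoded as option R with None = -oo. *)
Definition rmax (R : realType) := option R.

Definition madd (R : realType) (a b : rmax R) : rmax R :=
  match a, b with
  | None, _ => b
  | _, None => a
  | Some x, Some y => Some (Num.max x y)
  end.

Definition mmul (R : realType) (a b : rmax R) : rmax R :=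
  match a, b with
  | Some x, Some y => Some (x + y)
  | _, _ => None
  end.

Definition mle (R : realType) (a b : rmax R) : Prop :=
  match a, b with
  | None, _ => True
  | Some _, None => False
  | Some x, Some y => x <= y
  end.

Definition in_cone (R : realType) (n p : nat) (v : 'I_p -> 'I_n -> R)
    (x : 'I_n -> rmax R) : Prop :=
  exists lam : 'I_p -> rmax R,
    forall k : 'I_n, x k = \big[@madd R/None]_(r < p) mmul (lam r) (Some (v r k)).

Definition in_halfspace (R : realType) (n : nat) (I J : {set 'I_n})
    (a : 'I_n -> R) (x : 'I_n -> rmax R) : Prop :=
  mle (\big[@madd R/None]_(i in I) mmul (Some (a i)) (x i))
      (\big[@madd R/None]_(j in J) mmul (Some (a j)) (x j)).

Definition type_set (R : realType) (n p : nat) (v : 'I_p -> 'I_n -> R)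
    (x : 'I_n -> R) (j : 'I_n) : {set 'I_p} :=
  [set r : 'I_p | [forall k : 'I_n, v r k - x k <= v r j - x j]].

Definition in_cell (R : realType) (n p : nat) (v : 'I_p -> 'I_n -> R)
    (S : 'I_n -> {set 'I_p}) (x : 'I_n -> R) : Prop :=
  forall j : 'I_n, S j \subset type_set v x j.

Definition is_vertex (R : realType) (n p : nat) (v : 'I_p -> 'I_n -> R)
    (x : 'I_n -> R) : Prop :=
  forall z : 'I_n -> R,
    in_cell v (type_set v x) z <-> exists lam : R, forall k, z k = lam + x k.

(** Call an apex [c] admissible when every generator [v^r] attains the
    maximum of [v^r - c] at some coordinate outside the set [I] of finite
    coordinates where [y - c] is maximal; then the half-space with apex [c]
    and sides [I], [~: I] contains the cone but not [y].  Admissible apices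
    exist: the max-plus projection of [y] onto the cone when [y] is finite,
    an apex very low on the infinite entries of [y] otherwise.  If an
    admissible apex is not a vertex, its type graph splits along some set
    [C]; lowering [c] on [C] or on its complement by the smallest gap that
    keeps all incidences creates a new incidence and keeps the apex
    admissible.  There are at most [p * n] incidences, so this ends at a
    vertex. *)

From HB Require Import structures.
From mathcomp Require Import all_boot all_order all_algebra.
From mathcomp Require Import reals lra zify.
From Stdlib Require Import Classical FunctionalExtensionality.
Import Order.TTheory GRing.Theory Num.Theory.
Set Implicit Arguments. Unset Strict Implicit. Unset Printing Implicit Defensive.
Local Open Scope ring_scope.

Lemma maddA (R : realType) : associative (@madd R).
Proof. by case=> [a|] [b|] [c|] //=; rewrite maxA. Qed.

Lemma maddC (R : realType) : commutative (@madd R).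
Proof. by case=> [a|] [b|] //=; rewrite maxC. Qed.

Lemma madd0l (R : realType) : left_id None (@madd R).
Proof. by []. Qed.

HB.instance Definition _ (R : realType) :=
  Monoid.isComLaw.Build (rmax R) None (@madd R) (@maddA R) (@maddC R) (@madd0l R).

Section MaxPlus.
Variable R : realType.
Implicit Types a b c : rmax R.

Lemma mle_refl a : mle a a.
Proof. by case: a => [a|] /=. Qed.

Lemma mle_trans a b c : mle a b -> mle b c -> mle a c.
Proof. by case: a b c => [a|] [b|] [c|] //=; apply: le_trans. Qed.

Lemma mle_madd a b c : mle (madd a b) c <-> mle a c /\ mle b c.
Proof.
case: a b c => [a|] [b|] [c|] //=; try tauto.
by rewrite ge_max; split => [/andP[]|[-> ->]].
Qed.

Lemma mmul_maddr (s : R) a b :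
  mmul (Some s) (madd a b) = madd (mmul (Some s) a) (mmul (Some s) b).
Proof. by case: a b => [a|] [b|] //=; rewrite addr_maxr. Qed.

Lemma mmul_mle2l (s : R) a b : mle a b -> mle (mmul (Some s) a) (mmul (Some s) b).
Proof. by case: a b => [a|] [b|] //= ab; rewrite lerD2l. Qed.

Variable m : nat.
Implicit Types (P : pred 'I_m) (F : 'I_m -> rmax R).

Lemma mle_bigP P F b :
  mle (\big[@madd R/None]_(i | P i) F i) b <-> (forall i, P i -> mle (F i) b).
Proof.
split=> [Fb i Pi|]; first by move: Fb; rewrite (bigD1 i) // => /mle_madd[].
elim/big_rec: _ => [//|i x Pi IH] Fb.
by apply/mle_madd; split; [apply: Fb | apply: IH].
Qed.

Lemma mle_big P F i : P i -> mle (F i) (\big[@madd R/None]_(j | P j) F j).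
Proof. by move=> Pi; apply: (proj1 (mle_bigP _ _ _) (mle_refl _)). Qed.

Lemma big_madd_attained P F :
  \big[@madd R/None]_(i | P i) F i = None \/
  exists2 i, P i & \big[@madd R/None]_(j | P j) F j = F i.
Proof.
elim/big_rec: _ => [|i x Pi IH]; first by left.
right; case: IH => [->|[j Pj ->]]; first by exists i => //; case: (F i).
case Ei: (F i) => [a|]; case Ej: (F j) => [b|] /=; try by [exists i | exists j].
by case: (leP a b) => _; [exists j | exists i].
Qed.

Lemma big_madd_Some (G : 'I_m -> R) : (0 < m)%N ->
  exists i, \big[@madd R/None]_(j < m) Some (G j) = Some (G i).
Proof.
move=> m_gt0; case: (big_madd_attained xpredT (fun j => Some (G j))) => [E|[i _ ->]].
  by have := mle_big (fun j => Some (G j)) (isT : xpredT (Ordinal m_gt0)); rewrite E.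
by exists i.
Qed.

End MaxPlus.

Definition shift (R : realType) (n : nat) (C : {set 'I_n}) (t : R) (c : 'I_n -> R) :
  'I_n -> R := fun k => if k \in C then c k - t else c k.

Section Types.
Variables (R : realType) (n p : nat) (v : 'I_p -> 'I_n -> R).
Implicit Types (c : 'I_n -> R) (C : {set 'I_n}).

Lemma type_setP c r j :
  reflect (forall k, v r k - c k <= v r j - c j) (r \in type_set v c j).
Proof. by rewrite inE; apply: forallP. Qed.

Lemma exists_type c r : (0 < n)%N -> exists j, r \in type_set v c j.
Proof.
move=> n_gt0; case: (arg_maxP (fun k => v r k - c k) (isT : xpredT (Ordinal n_gt0))).
by move=> j _ jmax; exists j; apply/type_setP => k; apply: jmax.
Qed.

Definition incidence c : {set 'I_p * 'I_n} := [set rk | rk.1 \in type_set v c rk.2].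

Lemma incidenceE c r j : ((r, j) \in incidence c) = (r \in type_set v c j).
Proof. by rewrite /incidence in_set. Qed.

Lemma card_incidence c : (#|incidence c| <= p * n)%N.
Proof. by apply: (leq_trans (max_card _)); rewrite card_prod !card_ord. Qed.

Lemma incidence_sub_type c c' r j : incidence c \subset incidence c' ->
  r \in type_set v c j -> r \in type_set v c' j.
Proof. by move=> /subsetP sub; rewrite -!incidenceE; apply: sub. Qed.

Definition touches c C r := [exists k in C, r \in type_set v c k].

Definition separating c C := forall r, touches c C r -> ~~ touches c (~: C) r.

Lemma separatingC c C : separating c C -> separating c (~: C).
Proof. by move=> sepC r; rewrite setCK; apply: contraL (sepC r). Qed.

Lemma is_vertex_of_connected c :
  (forall C, separating c C -> C = set0 \/ C = setT) -> is_vertex v c.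
Proof.
move=> conn z; split; last first.
  case=> lam zE j; apply/subsetP => r /type_setP rj; apply/type_setP => k.
  by rewrite !zE; have := rj k; lra.
move=> zcell; have [n0|n_gt0] := posnP n.
  by exists 0 => k; move: (ltn_ord k); rewrite {2}n0.
(* A generator in the types at [j] and [k], for both [c] and [z], forces
   [z_j - c_j = z_k - c_k]: the level sets of [z - c] are separating. *)
pose d k := z k - c k; pose m := Ordinal n_gt0.
pose C := [set k | d k == d m].
have sepC : separating c C.
  move=> r /existsP[j /andP[+ rj]]; rewrite inE => /eqP dj.
  apply/negP => /existsP[k /andP[+ rk]]; rewrite in_setC inE => /negP[].
  apply/eqP; have /type_setP/(_ k) := rj; have /type_setP/(_ j) := rk.
  have /subsetP/(_ r rj)/type_setP/(_ k) := zcell j.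
  have /subsetP/(_ r rk)/type_setP/(_ j) := zcell k.
  by rewrite /d in dj *; lra.
case: (conn C sepC) => CE.
  by have := in_set0 m; rewrite -CE inE eqxx.
exists (d m) => k; have : k \in C by rewrite CE inE.
by rewrite inE /d => /eqP; lra.
Qed.

Lemma type_set_shift c C t r j : separating c C -> 0 <= t ->
  (forall r k j, ~~ touches c C r -> k \in C -> r \in type_set v c j ->
     t <= (v r j - c j) - (v r k - c k)) ->
  r \in type_set v c j -> r \in type_set v (shift C t c) j.
Proof.
move=> sepC t_ge0 gapP rj; have /type_setP rmax := rj.
apply/type_setP => k; rewrite /shift.
have [jC|jC] := boolP (j \in C); have [kC|kC] := boolP (k \in C);
  have := rmax k; try lra.
have rC : ~~ touches c C r.
  rewrite -[C]setCK; apply: (separatingC sepC).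
  by apply/existsP; exists j; rewrite in_setC jC.
by have := gapP r k j rC kC rj; lra.
Qed.

Lemma shift_incidence_proper c C : separating c C -> C != set0 ->
  (exists r, ~~ touches c C r) ->
  exists2 t, 0 < t & incidence c \proper incidence (shift C t c).
Proof.
move=> sepC /set0Pn[k0 k0C] [r0 r0C].
have [j0 r0j0] := exists_type c r0 (leq_ltn_trans (leq0n k0) (ltn_ord k0)).
(* [t] is the least amount by which some generator avoiding [C] must rise on
   [C] to reach its maximum. *)
pose Q (q : 'I_p * 'I_n * 'I_n) :=
  [&& ~~ touches c C q.1.1, q.1.2 \in C & q.1.1 \in type_set v c q.2].
pose gap (q : 'I_p * 'I_n * 'I_n) := (v q.1.1 q.2 - c q.2) - (v q.1.1 q.1.2 - c q.1.2).
have Q0 : Q (r0, k0, j0) by rewrite /Q /= r0C k0C.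
case: (arg_minP gap Q0) => -[[r1 k1] j1] /and3P[/= r1C k1C r1j1] gapmin.
set t := gap (r1, k1, j1) in gapmin *.
have gapP r k j : ~~ touches c C r -> k \in C -> r \in type_set v c j ->
    t <= (v r j - c j) - (v r k - c k).
  by move=> rC kC rj; apply: (gapmin (r, k, j)); rewrite /Q /= rC kC.
have r1k1 : r1 \notin type_set v c k1.
  by apply: contra r1C => r1k1; apply/existsP; exists k1; rewrite k1C.
have t_gt0 : 0 < t.
  move: r1k1; rewrite inE negb_forall => /existsP[k]; rewrite -ltNge.
  by have /type_setP/(_ k) := r1j1; rewrite /t /gap /=; lra.
exists t => //; apply/properP; split.
  apply/subsetP => -[r j]; rewrite !incidenceE.
  exact: type_set_shift sepC (ltW t_gt0) gapP.
exists (r1, k1); rewrite !incidenceE //.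
apply/type_setP => k; rewrite /shift k1C.
have [kC|kC] := boolP (k \in C).
  by have := gapP r1 k j1 r1C kC r1j1; rewrite /t /gap /=; lra.
by have /type_setP/(_ k) := r1j1; rewrite /t /gap /=; lra.
Qed.

End Types.

Section TopSet.
Variables (R : realType) (n : nat) (y : 'I_n -> rmax R).
Implicit Types (c : 'I_n -> R) (C : {set 'I_n}).

Definition top_set c : {set 'I_n} :=
  [set k | if y k is Some a then
     [forall k', if y k' is Some b then b - c k' <= a - c k else true] else false].

Lemma top_setP c k : k \in top_set c <->
  exists a, y k = Some a /\ forall k' b, y k' = Some b -> b - c k' <= a - c k.
Proof.
rewrite inE; case: (y k) => [a|]; last by split=> // -[a []].
split=> [/forallP atop|[_ [[<-] atop]]].
  by exists a; split=> // k' b yb; have := atop k'; rewrite yb.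
by apply/forallP => k'; case yk': (y k') => [b|] //; apply: atop yk'.
Qed.

Lemma top_set_nonempty c : (exists k a, y k = Some a) -> exists k, k \in top_set c.
Proof.
case=> k0 [a0 ya0]; have yk0 : y k0 != None by rewrite ya0.
case: (arg_maxP (fun k => odflt 0 (y k) - c k) (yk0 : (fun k => y k != None) k0)) => k yk kmax.
exists k; apply/top_setP; move: yk kmax; case: (y k) => [a|] // _ kmax.
by exists a; split=> // k' b yb; have := kmax k'; rewrite yb /=; apply.
Qed.

Lemma top_set_shift_notin c C t k : 0 <= t -> k \notin C ->
  k \in top_set (shift C t c) -> k \in top_set c.
Proof.
move=> t_ge0 kC /top_setP[a [ya atop]]; apply/top_setP; exists a; split=> // k' b yb.
by have := atop k' b yb; rewrite /shift (negbTE kC); case: ifP => _; lra.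
Qed.

Lemma top_set_shift_sub c C t : 0 <= t -> C :&: top_set c != set0 ->
  top_set (shift C t c) \subset top_set c.
Proof.
move=> t_ge0 /set0Pn[a0 /setIP[a0C /top_setP[b0 [ya0 a0top]]]].
apply/subsetP => k /top_setP[a [ya atop]]; apply/top_setP; exists a; split=> // k' b yb.
by have := atop a0 b0 ya0; have := a0top k' b yb; rewrite /shift a0C; case: ifP => _; lra.
Qed.

Lemma notin_halfspace c : (exists k a, y k = Some a) ->
  ~ in_halfspace (top_set c) (~: top_set c) (fun k => - c k) y.
Proof.
move=> yfin yhalf; have [i itop] := top_set_nonempty c yfin.
have /top_setP[a [ya atop]] := itop.
have := mle_trans (mle_big (fun k => mmul (Some (- c k)) (y k)) itop) yhalf.
rewrite ya /=.
case: (big_madd_attained (fun k => k \in ~: top_set c) (fun k => mmul (Some (- c k)) (y k)))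
  => [->|[j]] //; rewrite in_setC => jtop ->.
move: jtop; case yj: (y j) => [b|] //= /negP jtop ab; apply: jtop.
by apply/top_setP; exists b; split=> // k' b' yb'; have := atop k' b' yb'; lra.
Qed.

End TopSet.

Section Apex.
Variables (R : realType) (n p : nat) (v : 'I_p -> 'I_n -> R) (y : 'I_n -> rmax R).
Implicit Types (c : 'I_n -> R) (C : {set 'I_n}).

Definition admissible c := forall r, touches v c (~: top_set y c) r.

Lemma cone_sub_halfspace c x : admissible c -> in_cone v x ->
  in_halfspace (top_set y c) (~: top_set y c) (fun k => - c k) x.
Proof.
move=> adm [lam xE]; apply/mle_bigP => i _; rewrite xE.
rewrite (big_morph _ (mmul_maddr (- c i)) (erefl : mmul (Some (- c i)) None = None)).
apply/mle_bigP => r _; case lr: (lam r) => [l|] //.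
have /existsP[j /andP[jJ /type_setP rj]] := adm r.
apply: mle_trans (mle_big (fun k => mmul (Some (- c k)) (x k)) jJ).
apply: (@mle_trans _ _ (mmul (Some (- c j)) (Some (l + v r j)))).
  by have := rj i; rewrite /=; lra.
apply: mmul_mle2l; rewrite xE.
by have := mle_big (fun r => mmul (lam r) (Some (v r j))) (isT : xpredT r); rewrite lr.
Qed.

Lemma admissible_shift c C t : admissible c -> 0 <= t ->
  incidence v c \subset incidence v (shift C t c) ->
  C :&: top_set y c != set0 \/ (forall r, ~~ touches v c C r) ->
  admissible (shift C t c).
Proof.
move=> adm t_ge0 inc meet r; have /existsP[k /andP[ktop rk]] := adm r.
apply/existsP; exists k; rewrite (incidence_sub_type inc rk) andbT.
move: ktop; rewrite !in_setC; apply: contra; case: meet => [meet|avoid].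
  exact: (subsetP (top_set_shift_sub t_ge0 meet)).
apply: top_set_shift_notin t_ge0 _.
by apply: contra (avoid r) => kC; apply/existsP; exists k; rewrite kC.
Qed.

Lemma admissible_improve c C : admissible c -> separating v c C -> C != set0 ->
  (exists r, ~~ touches v c C r) ->
  C :&: top_set y c != set0 \/ (forall r, ~~ touches v c C r) ->
  exists c', admissible c' /\ (#|incidence v c| < #|incidence v c'|)%N.
Proof.
move=> adm sepC C0 avoid meet.
have [t t_gt0 inc] := shift_incidence_proper sepC C0 avoid.
exists (shift C t c); split; last exact: proper_card.
by apply: admissible_shift => //; [exact: ltW | exact: proper_sub].
Qed.

Lemma admissible_improve_separating c C : (0 < p)%N -> admissible c ->
  separating v c C -> C != set0 -> ~: C != set0 -> C :&: top_set y c != set0 ->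
  exists c', admissible c' /\ (#|incidence v c| < #|incidence v c'|)%N.
Proof.
move=> p_gt0 adm sepC C0 CC0 meet.
have [/existsP[r rC]|] := boolP [exists r, ~~ touches v c C r].
  by apply: (admissible_improve adm sepC C0); [exists r | left].
rewrite negb_exists => /forallP allC.
have touchC r : touches v c C r by move: (allC r); rewrite negbK.
apply: (admissible_improve adm (separatingC sepC) CC0).
  by exists (Ordinal p_gt0); apply: sepC.
by right => r; apply: sepC.
Qed.

Lemma admissible_step c : (0 < p)%N -> (exists k a, y k = Some a) ->
  admissible c -> ~ is_vertex v c ->
  exists c', admissible c' /\ (#|incidence v c| < #|incidence v c'|)%N.
Proof.
move=> p_gt0 yfin adm nvert.
have [C [sepC C0 CC0]] : exists C, [/\ separating v c C, C != set0 & ~: C != set0].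
  apply: NNPP => nosplit; apply/nvert/is_vertex_of_connected => C sepC.
  have [->|C0] := eqVneq C set0; first by left.
  have [CC0|CC0] := eqVneq (~: C) set0; first by right; rewrite -[C]setCK CC0 setC0.
  by case: nosplit; exists C.
have [a atop] := top_set_nonempty c yfin.
have [aC|aC] := boolP (a \in C).
  apply: (admissible_improve_separating p_gt0 adm sepC C0 CC0).
  by apply/set0Pn; exists a; rewrite inE aC.
apply: (admissible_improve_separating p_gt0 adm (separatingC sepC)); rewrite ?setCK //.
by apply/set0Pn; exists a; rewrite inE in_setC aC.
Qed.

Lemma admissible_vertex c : (0 < p)%N -> (exists k a, y k = Some a) ->
  admissible c -> exists c', admissible c' /\ is_vertex v c'.
Proof.
move=> p_gt0 yfin; have [m lem] := ubnP (p * n - #|incidence v c|)%N.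
elim: m => // m IH in c lem *; move=> adm.
have [vert|nvert] := classic (is_vertex v c); first by exists c.
have [c' [adm' lt]] := admissible_step p_gt0 yfin adm nvert.
by apply: (IH c') => //; have := card_incidence v c'; lia.
Qed.

Lemma finite_entry_of_notin_cone : ~ in_cone v y -> exists k a, y k = Some a.
Proof.
move=> ynotin; apply: NNPP => yinf; apply: ynotin; exists (fun _ => None) => k.
rewrite big1 //; case yk: (y k) => [a|] //; case: yinf; by exists k, a.
Qed.

Lemma exists_admissible_of_infinite_entry kn : (0 < p)%N -> y kn = None ->
  exists c, admissible c.
Proof.
move=> p_gt0 ykn.
(* [M] exceeds every spread [v^r_j - v^r_i], so each [v^r - c] peaks on an
   infinite entry of [y]. *)
case: (arg_maxP (fun q : 'I_p * 'I_n * 'I_n => v q.1.1 q.2 - v q.1.1 q.1.2)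
  (isT : xpredT (Ordinal p_gt0, kn, kn))) => -[[r1 i1] j1] _ spread.
pose M := v r1 j1 - v r1 i1 + 1.
exists (fun k => if y k is None then - M else 0) => r.
set c := fun k => _.
have [j rj] := exists_type v c r (leq_ltn_trans (leq0n kn) (ltn_ord kn)).
apply/existsP; exists j; rewrite rj andbT in_setC; apply/negP => /top_setP[a [yj _]].
have /type_setP/(_ kn) := rj; have := spread (r, kn, j) isT.
by rewrite /c yj ykn /M /=; lra.
Qed.

Lemma exists_admissible_of_finite z : (0 < p)%N -> y = (fun k => Some (z k)) ->
  ~ in_cone v y -> exists c, admissible c.
Proof.
move=> p_gt0 yE ynotin.
have n_gt0 : (0 < n)%N.
  rewrite lt0n; apply/negP => /eqP n0; apply: ynotin; exists (fun _ => None) => k.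
  by move: (ltn_ord k); rewrite {2}n0.
have argmin r : exists j, forall k, z j - v r j <= z k - v r k.
  case: (arg_minP (fun k => z k - v r k) (isT : xpredT (Ordinal n_gt0))) => j _ jmin.
  by exists j => k; apply: jmin.
have [am amin] := fin_all_exists argmin.
(* [c] is the max-plus projection of [z] onto the cone: [lam r] is the
   largest coefficient with [lam r + v^r <= z]. *)
pose lam r := z (am r) - v r (am r).
have projection k : exists a,
    \big[@madd R/None]_(r < p) mmul (Some (lam r)) (Some (v r k)) = Some a.
  by have [r rE] := big_madd_Some (fun r => lam r + v r k) p_gt0; exists (lam r + v r k).
have [c cE] := fin_all_exists projection.
have lam_le r k : lam r + v r k <= c k.
  by have := mle_big (fun r => mmul (Some (lam r)) (Some (v r k))) (isT : xpredT r); rewrite cE.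
have c_le k : c k <= z k.
  have : mle (Some (c k)) (Some (z k)).
    by rewrite -cE; apply/mle_bigP => r _ /=; have := amin r k; rewrite /lam; lra.
  by [].
have [k ck] : exists k, c k < z k.
  apply: NNPP => cz; apply: ynotin; exists (fun r => Some (lam r)) => k.
  rewrite cE yE /=; congr Some; apply/eqP; rewrite eq_le c_le andbT leNgt.
  by apply/negP => ck; apply: cz; exists k.
exists c => r; apply/existsP; exists (am r); apply/andP; split.
  rewrite in_setC; apply/negP => /top_setP[a []]; rewrite yE => -[<-] /(_ k (z k) erefl).
  by have := lam_le r (am r); have := c_le (am r); rewrite /lam; lra.
apply/type_setP => k'; have := lam_le r k'; have := lam_le r (am r).
by have := c_le (am r); rewrite /lam; lra.
Qed.

Lemma exists_admissible : (0 < p)%N -> ~ in_cone v y -> exists c, admissible c.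
Proof.
move=> p_gt0 ynotin; have [[k yk]|yfin] := classic (exists k, y k = None).
  exact: exists_admissible_of_infinite_entry yk.
apply: (@exists_admissible_of_finite (fun k => odflt 0 (y k))) => //.
apply: functional_extensionality => k; case yk: (y k) => [a|] //.
by case: yfin; exists k.
Qed.

End Apex.

Theorem proposition4p6 (R : realType) (n p : nat) (v : 'I_p -> 'I_n -> R)
    (y : 'I_n -> rmax R) (hp : (0 < p)%N) :
  ~ in_cone v y ->
  exists (I J : {set 'I_n}) (a : 'I_n -> R),
    [disjoint I & J] /\ I :|: J = [set: 'I_n] /\
    (forall x : 'I_n -> rmax R, in_cone v x -> in_halfspace I J a x) /\
    ~ in_halfspace I J a y /\
    is_vertex v (fun k => - a k).
Proof.
move=> ynotin; have yfin := finite_entry_of_notin_cone ynotin.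
have [c0 adm0] := exists_admissible hp ynotin.
have [c [adm vert]] := admissible_vertex hp yfin adm0.
exists (top_set y c), (~: top_set y c), (fun k => - c k).
split; first by rewrite -setI_eq0 setICr.
split; first by rewrite setUCr.
split; first by move=> x; apply: cone_sub_halfspace.
split; first exact: notin_halfspace.
by have -> : (fun k => - - c k) = c by apply: functional_extensionality => k; rewrite opprK.
Qed.
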